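(* Let $q$ be a prime power and $F/\mathbb{F}_q$ an algebraic function field with full constant field $\mathbb{F}_q$ of genus $g\geq 2$. For $n\geq 0$ let $A_n$ be the number of effective divisors of degree $n$ of $F$, for $r\geq 1$ let $B_r$ be the number of places of degree $r$ of $F$, let $\Sigma_1=\sum_{n=0}^{g-1}A_n$ and $\Delta_1=\{r:1\leq r\leq g-1,\ B_r\geq 1\}$. Then $$\Sigma_1\leq\prod_{r\in\Delta_1}\binom{B_r+\lfloor\frac{g-1}{r}\rfloor}{\lfloor\frac{g-1}{r}\rfloor}.$$ *)

From HB Require Import structures.
From mathcomp Require Import all_boot all_order all_algebra.
From Stdlib Require Lists.List.
Set Implicit Arguments. Unset Strict Implicit. Unset Printing Implicit Defensive.
Import Order.TTheory GRing.Theory Num.Theory.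
Local Open Scope ring_scope.

Definition counts (T : Type) (P : T -> Prop) (n : nat) : Prop :=
  exists s : seq T, List.NoDup s /\ size s = n /\ forall x, P x <-> List.In x s.

Section FunctionField.
(* K plays the role of F_q (q = #|K|, automatically a prime power);
   F is the function field, an extension of K via iota. *)
Variables (K : finFieldType) (F : fieldType) (iota : {rmorphism K -> F}).

Definition ev (p : {poly K}) (x : F) : F := (map_poly iota p).[x].

Definition transcendental (x : F) : Prop :=
  forall p : {poly K}, p != 0 -> ev p x != 0.

Definition algebraic (z : F) : Prop :=
  exists p : {poly K}, p != 0 /\ ev p z = 0.

(* F is a finite (algebraic) extension of the rational function field K(x)
   for some x transcendental over K: finitely many e_i span F over K(x). *)
Definition is_function_field : Prop :=
  exists x : F, transcendental x /\
    exists (m : nat) (e : 'I_m -> F), forall f : F,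
      exists (b : {poly K}) (a : 'I_m -> {poly K}),
        ev b x != 0 /\ ev b x * f = \sum_(i < m) ev (a i) x * e i.

Definition full_constant_field : Prop :=
  forall z : F, algebraic z -> exists a : K, z = iota a.

(* Places of F/K, represented by their normalized discrete valuations
   v : F -> int (convention v 0 = 0, the value at 0 being irrelevant). *)
Definition is_place (v : F -> int) : Prop :=
  [/\ forall x y, x != 0 -> y != 0 -> v (x * y) = v x + v y,
      forall x y, x != 0 -> y != 0 -> x + y != 0 ->
        (v x <= v (x + y)) \/ (v y <= v (x + y)),
      forall a : K, a != 0 -> v (iota a) = 0,
      exists t : F, t != 0 /\ v t = 1
    & v 0 = 0].

Definition in_ring (v : F -> int) (x : F) : Prop := x = 0 \/ 0 <= v x.
Definition in_ideal (v : F -> int) (x : F) : Prop := x = 0 \/ 0 < v x.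

(* deg P = r : the residue class field O_P/P has dimension r over K. *)
Definition place_deg (v : F -> int) (r : nat) : Prop :=
  exists e : 'I_r -> F,
    [/\ forall i, in_ring v (e i),
        forall z, in_ring v z -> exists c : 'I_r -> K,
          in_ideal v (z - \sum_(i < r) iota (c i) * e i)
      & forall c : 'I_r -> K,
          in_ideal v (\sum_(i < r) iota (c i) * e i) -> forall i, c i = 0].

Definition is_divisor (D : (F -> int) -> int) : Prop :=
  (forall v, ~ is_place v -> D v = 0) /\
  exists s : seq (F -> int), forall v, D v != 0 -> List.In v s.

Definition effective (D : (F -> int) -> int) : Prop := forall v, 0 <= D v.

Definition div_deg (D : (F -> int) -> int) (n : int) : Prop :=
  exists (s : seq (F -> int)) (ds : seq nat),
    [/\ List.NoDup s,
        forall v, D v != 0 -> List.In v s,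
        List.Forall2 place_deg s ds
      & n = foldr (fun p acc => D p.1 * (p.2)%:Z + acc) 0 (zip s ds)].

Definition eff_div_of_deg (n : nat) (D : (F -> int) -> int) : Prop :=
  [/\ is_divisor D, effective D & div_deg D n%:Z].

Definition inL (D : (F -> int) -> int) (x : F) : Prop :=
  x = 0 \/ forall v, is_place v -> - D v <= v x.

Definition dimL (D : (F -> int) -> int) (m : nat) : Prop :=
  exists e : 'I_m -> F,
    [/\ forall i, inL D (e i),
        forall x, inL D x -> exists c : 'I_m -> K,
          x = \sum_(i < m) iota (c i) * e i
      & forall c : 'I_m -> K,
          \sum_(i < m) iota (c i) * e i = 0 -> forall i, c i = 0].

(* Genus: g = max { deg D - l(D) + 1 : D divisor } (Stichtenoth Def. 1.4.15). *)
Definition is_genus (g : nat) : Prop :=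
  (forall D n m, is_divisor D -> div_deg D n -> dimL D m ->
     n - m%:Z + 1 <= g%:Z) /\
  (exists D n m, [/\ is_divisor D, div_deg D n, dimL D m & n - m%:Z + 1 = g%:Z]).

End FunctionField.

(* An effective divisor of degree n < g is determined by its multiplicities at
   the places of degree r <= g - 1.  For each such r, the multiplicities at the
   B_r places of degree r form a vector of length B_r whose entries sum to at
   most (g - 1)/r, because r times that sum is at most n <= g - 1; there are
   'C(B_r + k, k) such vectors for k = (g - 1)/r.  Hence the pairs (n, D)
   counted by the left-hand side inject into a product of these sets of
   vectors.  The degree n is recovered as the weighted sum of the entries, so
   no uniqueness of the degree of a place is needed. *)
From HB Require Import structures.
From mathcomp Require Import all_boot all_order all_algebra zify.
From mathcomp Require Import boolp.
Set Implicit Arguments. Unset Strict Implicit. Unset Printing Implicit Defensive.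
Import Order.TTheory GRing.Theory Num.Theory.

Lemma In_mem (T : eqType) (x : T) (s : seq T) : List.In x s <-> x \in s.
Proof.
elim: s => //= a s IH; rewrite in_cons; split.
  by case=> [->|/IH ->]; rewrite ?eqxx ?orbT.
by case/orP => [/eqP ->|/IH]; auto.
Qed.

Lemma NoDup_uniq (T : eqType) (s : seq T) : List.NoDup s <-> uniq s.
Proof.
elim: s => [|a s IH]; first by split => // _; constructor.
split => [Has | /= /andP[Ha Hs]].
  by inversion Has; subst; apply/andP; split; [apply/negP => /In_mem | apply/IH].
by constructor; [move/In_mem; rewrite (negbTE Ha) | apply/IH].
Qed.

Lemma countsP (T : eqType) (P : T -> Prop) (n : nat) :
  counts P n <-> exists s : seq T, [/\ uniq s, size s = n & forall x, P x <-> x \in s].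
Proof.
split=> [[s [/NoDup_uniq us [sz Ps]]] | [s [us sz Ps]]]; exists s.
  by split=> // x; rewrite -In_mem.
by split; [apply/NoDup_uniq | split=> // x; rewrite In_mem].
Qed.

Lemma Forall2_nth (S T : Type) (R : S -> T -> Prop) (s : seq S) (t : seq T) :
  List.Forall2 R s t ->
  size s = size t /\ forall i x0 y0, i < size s -> R (nth x0 s i) (nth y0 t i).
Proof.
elim=> [|x y s' t' Rxy _ [sz IH]]; first by split.
by split=> [|[|i] x0 y0 //= Hi]; [rewrite /= sz | apply: IH].
Qed.

Definition incr_head (t : seq nat) : seq nat :=
  if t is a :: t' then a.+1 :: t' else [::].

(* [bounded_vectors B k] lists the vectors of length B with entry sum at most
   k, by Pascal's rule: either the first entry is 0, or it is positive and
   decreasing it gives a vector of sum at most k - 1. *)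
Fixpoint bounded_vectors (B k : nat) : seq (seq nat) :=
  if B is B'.+1 then
    let fix bv_k k := if k is k'.+1 then
        [seq 0 :: t | t <- bounded_vectors B' k] ++ [seq incr_head t | t <- bv_k k']
      else [:: nseq B 0] in bv_k k
  else [:: [::]].

Lemma bounded_vectorsSS B k :
  bounded_vectors B.+1 k.+1 =
  [seq 0 :: t | t <- bounded_vectors B k.+1] ++
  [seq incr_head t | t <- bounded_vectors B.+1 k].
Proof. by []. Qed.

Lemma size_bounded_vectors B k : size (bounded_vectors B k) = 'C(B + k, k).
Proof.
elim: B k => [|B IHB] k; first by rewrite add0n binn.
elim: k => [|k IHk]; first by rewrite bin0.
rewrite bounded_vectorsSS size_cat !size_map IHB IHk !addSn !addnS binS addnC.
by rewrite [RHS]binS addnC.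
Qed.

Lemma sumn_eq0_nseq (t : seq nat) : sumn t = 0 -> t = nseq (size t) 0.
Proof. by elim: t => //= a t IH /eqP; rewrite addn_eq0 => /andP[/eqP-> /eqP/IH <-]. Qed.

Lemma mem_bounded_vectors B k t :
  size t = B -> sumn t <= k -> t \in bounded_vectors B k.
Proof.
elim: B k t => [|B IHB] k t; first by case: t.
elim: k t => [|k IHk] t.
  by move=> sz; rewrite leqn0 => /eqP/sumn_eq0_nseq ->; rewrite sz mem_seq1.
case: t => // -[|a] t [sz] sum_le; rewrite bounded_vectorsSS mem_cat.
  by rewrite (map_f (cons 0)) // IHB.
apply/orP; right; apply/mapP; exists (a :: t) => //.
by rewrite IHk //= sz.
Qed.

Fixpoint seq_prod (T : Type) (xs : seq (seq T)) : seq (seq T) :=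
  if xs is x :: xs' then [seq a :: b | a <- x, b <- seq_prod xs'] else [:: [::]].

Lemma size_seq_prod (T : Type) (xs : seq (seq T)) :
  size (seq_prod xs) = \prod_(x <- xs) size x.
Proof. by elim: xs => [|x xs IH]; rewrite ?big_nil ?big_cons //= size_allpairs IH. Qed.

Lemma mem_seq_prod (T : eqType) (ts : seq T) (xs : seq (seq T)) :
  all2 (fun a x => a \in x) ts xs -> ts \in seq_prod xs.
Proof.
elim: xs ts => [|x xs IH] [|a ts] //= /andP[ax /IH tsxs].
exact: (allpairs_f (fun a b => a :: b)).
Qed.

Section Encoding.
Variables (P : eqType) (Pl : nat -> seq P) (g : nat).

(* Row r of the code lists the multiplicities at the places of [Pl r] whose
   degree is r; a place of another degree listed in [Pl r] contributes 0. *)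
Definition encode (m d : P -> nat) : seq (seq nat) :=
  [seq [seq if d w == r then m w else 0 | w <- Pl r] | r <- iota 1 (g - 1)].

Definition code_weight (c : seq (seq nat)) : nat :=
  \sum_(r <- iota 1 (g - 1)) r * sumn (nth [::] c r.-1).

Definition code_mult (c : seq (seq nat)) (w : P) : nat :=
  \sum_(r <- iota 1 (g - 1))
     if w \in Pl r then nth 0 (nth [::] c r.-1) (index w (Pl r)) else 0.

Definition codes : seq (seq (seq nat)) :=
  seq_prod [seq bounded_vectors (size (Pl r)) ((g - 1) %/ r) | r <- iota 1 (g - 1)].

Lemma size_codes :
  size codes = \prod_(r <- iota 1 (g - 1)) 'C(size (Pl r) + (g - 1) %/ r, (g - 1) %/ r).
Proof. by rewrite size_seq_prod big_map; under eq_bigr do rewrite size_bounded_vectors. Qed.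

Lemma nth_encode m d r : r \in iota 1 (g - 1) ->
  nth [::] (encode m d) r.-1 = [seq if d w == r then m w else 0 | w <- Pl r].
Proof.
rewrite mem_iota => /andP[r_gt0 r_lt]; have r_le : r.-1 < g - 1.
  by rewrite -ltnS prednK // -add1n.
by rewrite /encode (nth_map 0) ?size_iota // nth_iota // add1n prednK.
Qed.

Section EncodeSpec.
Variables (m d : P -> nat) (s : seq P) (n : nat).
Hypotheses (uniq_Pl : forall r, 0 < r -> uniq (Pl r)) (uniq_s : uniq s)
  (n_lt_g : n < g) (n_def : n = \sum_(w <- s) m w * d w)
  (supp : forall w, m w != 0 -> [/\ w \in s, w \in Pl (d w) & 0 < d w]).

Lemma mem_iota_deg w : m w != 0 -> d w \in iota 1 (g - 1).
Proof.
move=> mw; have [ws _ dw_gt0] := supp mw.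
have dw_le : d w <= n.
  rewrite n_def (bigD1_seq w) //= (leq_trans _ (leq_addr _ _)) //.
  by rewrite leq_pmull // lt0n.
by rewrite mem_iota dw_gt0 subnKC ?(leq_ltn_trans dw_le) //; case: g n_lt_g.
Qed.

Lemma code_mult_encode w : code_mult (encode m d) w = m w.
Proof.
rewrite /code_mult.
under eq_big_seq => r r_deg.
  rewrite nth_encode //.
  have -> : (if w \in Pl r then nth 0 [seq if d x == r then m x else 0 | x <- Pl r]
                                      (index w (Pl r)) else 0)
            = if (w \in Pl r) && (d w == r) then m w else 0.
    by case: ifP => //= wP; rewrite (nth_map w) ?index_mem // nth_index.
  over.
have [m0|mw] := eqVneq (m w) 0.
  by rewrite big1_seq // => r _; rewrite m0; case: ifP.
have [_ wP _] := supp mw.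
rewrite (bigD1_seq (d w)) ?mem_iota_deg ?iota_uniq //= wP eqxx /=.
by rewrite big1_seq ?addn0 // => r /andP[/= r_ne _]; rewrite eq_sym (negbTE r_ne) andbF.
Qed.

Lemma sumn_encode_row r : r \in iota 1 (g - 1) ->
  sumn (nth [::] (encode m d) r.-1) = \sum_(w <- s) if d w == r then m w else 0.
Proof.
move=> r_deg; rewrite nth_encode // sumnE big_map.
have r_gt0 : 0 < r by move: r_deg; rewrite mem_iota => /andP[].
have support_sum (t : seq P) : \sum_(w <- t) (if d w == r then m w else 0) =
    \sum_(w <- [seq w <- t | (d w == r) && (m w != 0)]) m w.
  rewrite big_filter [RHS]big_mkcond; apply: eq_bigr => w _.
  by case: (d w == r) => //=; case: eqP => // ->.
rewrite !support_sum; apply/perm_big/uniq_perm; rewrite ?filter_uniq ?uniq_Pl //.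
move=> w; rewrite !mem_filter; apply/andP/andP => -[/andP[/eqP dw mw] wP].
  by have [ws _ _] := supp mw; rewrite dw eqxx mw.
by have [_ wP' _] := supp mw; rewrite dw eqxx mw -dw.
Qed.

Lemma code_weight_encode : code_weight (encode m d) = n.
Proof.
rewrite /code_weight (eq_big_seq _ (fun r rd => congr1 (muln r) (sumn_encode_row rd))).
rewrite n_def (eq_bigr (fun w => \sum_(r <- iota 1 (g - 1)) if d w == r then m w * r else 0)).
  rewrite exchange_big /=; apply: eq_bigr => r _; rewrite mulnC big_distrl /=.
  by apply: eq_bigr => w _; case: ifP.
move=> w _; have [m0|mw] := eqVneq (m w) 0.
  by rewrite m0 mul0n big1 // => r _; case: ifP.
rewrite (bigD1_seq (d w)) ?mem_iota_deg ?iota_uniq //= eqxx.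
by rewrite big1_seq ?addn0 // => r /andP[/= r_ne _]; rewrite eq_sym (negbTE r_ne).
Qed.

Lemma encode_in_codes : encode m d \in codes.
Proof.
rewrite /codes; apply: mem_seq_prod.
rewrite /encode all2E !size_map eqxx zip_map all_map; apply/allP => r r_deg /=.
have r_gt0 : 0 < r by move: r_deg; rewrite mem_iota => /andP[].
apply: mem_bounded_vectors; first by rewrite size_map.
rewrite -[map _ _](nth_encode m d r_deg) leq_divRL // mulnC.
have : r * sumn (nth [::] (encode m d) r.-1) <= code_weight (encode m d).
  by rewrite /code_weight (bigD1_seq r) ?iota_uniq //= leq_addr.
rewrite code_weight_encode => /leq_trans; apply; lia.
Qed.

End EncodeSpec.
End Encoding.

Local Open Scope ring_scope.

Lemma foldr_zip_sum_index (T : eqType) (D : T -> int) (s : seq T) (ds : seq nat) :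
  uniq s -> size s = size ds ->
  foldr (fun p acc => D p.1 * (p.2)%:Z + acc) 0 (zip s ds) =
  \sum_(w <- s) D w * (nth 0%N ds (index w s))%:Z.
Proof.
elim: s ds => [|x s IH] [|d ds] //=; first by rewrite big_nil.
case/andP => xs us [sz]; rewrite big_cons eqxx IH //; congr (_ + _).
apply: eq_big_seq => w ws /=; case: eqP => // ew.
by rewrite ew ws in xs.
Qed.

Section Places.
Variables (K : finFieldType) (F : fieldType) (iota : {rmorphism K -> F}).

(* The residue field is nonzero: v 1 = 0, so 1 lies in O_P but not in P. *)
Lemma no_place_deg0 v : is_place iota v -> ~ place_deg iota v 0.
Proof.
case=> vM _ _ _ _ [e [_ residue _]].
have v1 : v 1 = 0 by have := vM 1 1 (oner_neq0 _) (oner_neq0 _); rewrite mulr1; lia.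
have [|c] := residue 1; first by right; rewrite v1.
rewrite big_ord0 subr0 => -[/eqP|]; first by rewrite oner_eq0.
by rewrite v1.
Qed.

Lemma eff_div_code (Pl : nat -> seq (F -> int)) (g n : nat) (D : (F -> int) -> int) :
  (forall r, (0 < r)%N ->
     uniq (Pl r) /\ forall v, is_place iota v -> place_deg iota v r -> v \in Pl r) ->
  (n < g)%N -> eff_div_of_deg iota n D ->
  exists c, [/\ c \in codes Pl g, code_weight g c = n
              & forall w, code_mult Pl g c w = absz (D w)].
Proof.
move=> HPl n_lt_g [[D_places _] D_ge0 [s [ds [/NoDup_uniq us supp /Forall2_nth[sz s_deg] n_def]]]].
pose d w := nth 0%N ds (index w s).
have absD w : (absz (D w))%:Z = D w by apply/gez0_abs/D_ge0.
exists (encode Pl g (fun w => absz (D w)) d).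
have uniq_Pl r : (0 < r)%N -> uniq (Pl r) by case/HPl.
have n_sum : n = (\sum_(w <- s) absz (D w) * d w)%N.
  apply/eqP; rewrite -(eqr_nat int) natr_sum natz n_def; apply/eqP.
  rewrite foldr_zip_sum_index //; apply: eq_bigr => w _.
  by rewrite natrM !natz absD.
have supp_mult w : absz (D w) != 0%N -> [/\ w \in s, w \in Pl (d w) & (0 < d w)%N].
  rewrite absz_eq0 => Dw; have ws : w \in s by apply/In_mem/supp.
  have w_place : is_place iota w.
    by case: (pselect (is_place iota w)) => // /D_places/eqP; rewrite (negbTE Dw).
  have w_deg : place_deg iota w (d w).
    by have := s_deg (index w s) w 0%N; rewrite nth_index // index_mem; apply.
  have d_gt0 : (0 < d w)%N.
    by rewrite lt0n; apply/eqP => d0; apply: (no_place_deg0 w_place); rewrite -d0.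
  by split=> //; case: (HPl _ d_gt0) => _; apply.
split; first exact: encode_in_codes uniq_Pl us n_lt_g n_sum supp_mult.
  exact: code_weight_encode uniq_Pl us n_lt_g n_sum supp_mult.
exact: code_mult_encode us n_lt_g n_sum supp_mult.
Qed.

Lemma count_small_eff_divs (Pl : nat -> seq (F -> int)) (g : nat)
    (Dl : nat -> seq ((F -> int) -> int)) :
  (forall r, (0 < r)%N ->
     uniq (Pl r) /\ forall v, is_place iota v -> place_deg iota v r -> v \in Pl r) ->
  (forall n, uniq (Dl n)) -> (forall n D, D \in Dl n -> eff_div_of_deg iota n D) ->
  (size [seq (n, D) | n <- index_iota 0 g, D <- Dl n] <= size (codes Pl g))%N.
Proof.
move=> HPl uniq_Dl Dl_eff; set S := [seq (n, D) | n <- _, D <- _].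
have /choice[code Hcode] (x : nat * ((F -> int) -> int)) : exists c, x \in S ->
    [/\ c \in codes Pl g, code_weight g c = x.1 & forall w, code_mult Pl g c w = absz (x.2 w)].
  case: (boolP (x \in S)) => [/allpairsPdep[n [D [n_lt D_in ->]]] | _]; last by exists [::].
  have n_lt_g : (n < g)%N by move: n_lt; rewrite mem_index_iota.
  by have [c Hc] := eff_div_code HPl n_lt_g (Dl_eff _ _ D_in); exists c.
have S_effective x : x \in S -> effective x.2.
  by case/allpairsPdep=> n [D [_ D_in ->]]; have [] := Dl_eff _ _ D_in.
have code_inj : {in S &, injective code}.
  move=> [n D] [n' D'] xS yS eq_code.
  have [_ /= wx mx] := Hcode _ xS; have [_ /= wy my] := Hcode _ yS.
  congr pair; first by rewrite -wx eq_code wy.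
  apply/funext => w; rewrite -[D w]gez0_abs ?(S_effective _ xS) //.
  by rewrite -[D' w]gez0_abs ?(S_effective _ yS) // -mx -my eq_code.
have uniq_S : uniq S.
  apply: allpairs_uniq_dep => //; first exact: iota_uniq.
  by apply: in2W => -[x1 y1] [x2 y2] /= [-> ->].
rewrite -(size_map code); apply: uniq_leq_size; first by rewrite map_inj_in_uniq.
by move=> _ /mapP[x xS ->]; have [] := Hcode x xS.
Qed.

End Places.

Local Close Scope ring_scope.

Theorem theorem3p6 (K : finFieldType) (F : fieldType)
    (iota : {rmorphism K -> F}) (g : nat) (A B : nat -> nat) :
  is_function_field iota ->
  full_constant_field iota ->
  is_genus iota g ->
  (2 <= g)%N ->
  (forall n : nat, counts (eff_div_of_deg iota n) (A n)) ->
  (forall r : nat, (1 <= r)%N ->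
     counts (fun v => is_place iota v /\ place_deg iota v r) (B r)) ->
  (\sum_(0 <= n < g) A n
     <= \prod_(1 <= r < g | (1 <= B r)%N) 'C(B r + (g - 1) %/ r, (g - 1) %/ r))%N.
Proof.
move=> _ _ _ _ HA HB.
have /choice[Pl HPl] r : exists s : seq (F -> int), (0 < r)%N ->
    [/\ uniq s, size s = B r & forall v, is_place iota v /\ place_deg iota v r <-> v \in s].
  by case: (posnP r) => [->|/HB/countsP[s Hs]]; [exists [::] | exists s].
have /choice[Dl HDl] n : exists s, [/\ uniq s, size s = A n
    & forall D, eff_div_of_deg iota n D <-> D \in s] by apply/countsP.
have -> : \sum_(0 <= n < g) A n = size [seq (n, D) | n <- index_iota 0 g, D <- Dl n].
  rewrite size_allpairs_dep sumnE big_map.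
  by apply: eq_bigr => n _; have [_ -> _] := HDl n.
have -> : \prod_(1 <= r < g | 1 <= B r) 'C(B r + (g - 1) %/ r, (g - 1) %/ r) = size (codes Pl g).
  rewrite size_codes big_mkcond /index_iota; apply: eq_big_seq => r.
  rewrite mem_iota => /andP[r_gt0 _]; have [_ -> _] := HPl r r_gt0.
  by case: (B r) => [|b] /=; rewrite ?add0n ?binn.
apply: (@count_small_eff_divs _ _ iota).
- by move=> r /HPl[uPl _ memPl]; split=> // v *; apply/memPl.
- by move=> n; have [] := HDl n.
- by move=> n D; have [_ _ ->] := HDl n.
Qed.
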